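(* Let $a,b,c\in\mathbb{C}$ with $a\neq0$, $\Re(b)>0$, $\Re(b+a+c)>0$, $\Re(b+a-c)>0$, $\Re(b-a+c)>0$, $\Re(b-a-c)>0$, and $\frac{a+c}{b},\frac{a-c}{b}\notin\{\pm1,\pm3,\pm5,\dots\}$. Fix a square root $\sqrt{a^2-c^2}$, put $\mu=\frac{\sqrt{a^2-c^2}}{2b}$, $\tau_1=\frac12-\frac{a+c}{2b}$, $\tau_2=\frac12-\frac{a-c}{2b}$, $\tau_3=\frac12+\frac{a+c}{2b}$, $\tau_4=\frac12+\frac{a-c}{2b}$, and $Q=(b-a-c)(b+a+c)(b-a+c)(b+a-c)$. Assume $\frac12\pm\mu\notin\mathbb{Z}_0^-$ and $1+\tau_j\notin\mathbb{Z}_0^-$ ($j=1,\dots,4$). Then $$ {}_7F_6\!\left(\begin{matrix}1,\ \frac32-\mu,\ \frac32+\mu,\ \tau_1,\ \tau_2,\ \tau_3,\ \tau_4\\ \frac12-\mu,\ \frac12+\mu,\ 1+\tau_1,\ 1+\tau_2,\ 1+\tau_3,\ 1+\tau_4\end{matrix};\,1\right) =\frac{\pi Q}{4\,(ab^3-a^3b+abc^2)}\cdot\frac{\sin\!\big(\frac{a\pi}{b}\big)}{\cos\!\big(\frac{c\pi}{b}\big)+\cos\!\big(\frac{a\pi}{b}\big)}. $$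
   Context: $\mathbb{Z}_0^-=\{0,-1,-2,\dots\}$. The Pochhammer symbol is $(\lambda)_0=1$, $(\lambda)_n=\lambda(\lambda+1)\cdots(\lambda+n-1)$ for $n\ge1$. The generalized hypergeometric series is ${}_pF_q\!\left(\begin{matrix}\alpha_1,\dots,\alpha_p\\ \beta_1,\dots,\beta_q\end{matrix};z\right)=\sum_{n=0}^\infty\frac{(\alpha_1)_n\cdots(\alpha_p)_n}{(\beta_1)_n\cdots(\beta_q)_n}\frac{z^n}{n!}$ (with no $\beta_j\in\mathbb{Z}_0^-$). *)

From Stdlib Require Import Reals ZArith List.
Open Scope R_scope.

Definition Cplx : Type := (R * R)%type.
Definition Re (z : Cplx) : R := fst z.
Definition Im (z : Cplx) : R := snd z.
Definition RtoC (x : R) : Cplx := (x, 0).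
Definition Cadd (z w : Cplx) : Cplx := (Re z + Re w, Im z + Im w).
Definition Copp (z : Cplx) : Cplx := (- Re z, - Im z).
Definition Csub (z w : Cplx) : Cplx := Cadd z (Copp w).
Definition Cmul (z w : Cplx) : Cplx :=
  (Re z * Re w - Im z * Im w, Re z * Im w + Im z * Re w).
(* inverse; Cinv 0 = 0 by convention (never used at 0 in the statement) *)
Definition Cinv (z : Cplx) : Cplx :=
  (Re z / (Re z ^ 2 + Im z ^ 2), - Im z / (Re z ^ 2 + Im z ^ 2)).
Definition Cdiv (z w : Cplx) : Cplx := Cmul z (Cinv w).

Definition Csin (z : Cplx) : Cplx := (sin (Re z) * cosh (Im z), cos (Re z) * sinh (Im z)).
Definition Ccos (z : Cplx) : Cplx := (cos (Re z) * cosh (Im z), - (sin (Re z) * sinh (Im z))).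

Fixpoint poch (l : Cplx) (n : nat) : Cplx :=
  match n with
  | O => RtoC 1
  | S k => Cmul (poch l k) (Cadd l (RtoC (INR k)))
  end.

Definition Cprod (l : list Cplx) : Cplx := fold_right Cmul (RtoC 1) l.

Definition hyp_term (alphas betas : list Cplx) (z : Cplx) (n : nat) : Cplx :=
  Cdiv (Cmul (Cprod (map (fun a => poch a n) alphas)) (Cprod (map (fun _ => z) (seq 0 n))))
       (Cmul (Cprod (map (fun b => poch b n) betas)) (RtoC (INR (fact n)))).

Fixpoint Cpartial (f : nat -> Cplx) (N : nat) : Cplx :=
  match N with
  | O => f O
  | S k => Cadd (Cpartial f k) (f (S k))
  end.

Definition Cseries_sum (f : nat -> Cplx) (L : Cplx) : Prop :=
  Un_cv (fun N => Re (Cpartial f N)) (Re L) /\ Un_cv (fun N => Im (Cpartial f N)) (Im L).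

Definition pFq_eq (alphas betas : list Cplx) (z L : Cplx) : Prop :=
  Cseries_sum (hyp_term alphas betas z) L.

Definition in_Z0minus (z : Cplx) : Prop := exists n : nat, z = RtoC (- INR n).

Definition odd_int (z : Cplx) : Prop := exists k : Z, z = RtoC (IZR (2 * k + 1)).

(* Put p = (a+c)/(2b) and q = (a-c)/(2b), so that mu^2 = p q.  Since (z+1)_n / (z)_n = (z+n)/z,
   the n-th term of the series is, with x = n + 1/2,
     (x^2 - p q)/(1/4 - p q) * (1/4 - p^2)(1/4 - q^2) / ((x^2 - p^2)(x^2 - q^2)),
   and partial fractions turn it into K (T_n(pi p) + T_n(pi q)) for a constant K, where
   T_n(w) = 2 w / (beta_n^2 - w^2) and beta_n = (n + 1/2) pi.  Summing over n is the
   Mittag-Leffler expansion tan w = sum_n T_n(w), and the right-hand side of the theorem equals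
   K (tan(pi p) + tan(pi q)) by the addition formulas.

   The expansion of tan is obtained without complex analysis: iterating the duplication
   formula gives the exact identity
     tan w = 2^-(m+1) sum_{k < 2^m} sin(2u) / (sin^2 (2^-(m+1) beta_k) - sin^2 u),
   u = 2^-(m+1) w; as m -> oo each summand tends to T_k(w), while the summands with k >= K are
   O(|w| / k^2) uniformly in m. *)

From Stdlib Require Import Reals Lra Lia ZArith List Classical.
Import ListNotations.
From Coquelicot Require Import Coquelicot.
From Pilot Require Import Defs.
Open Scope R_scope.

(* [Cplx] and Coquelicot's [C] are both [R * R], but [ring] and [field] are registered on [C]
   only: [toC] retypes an equation, [Defs_to_C] swaps the operations of [Defs] for their
   convertible Coquelicot counterparts. *)
Ltac toC := match goal with |- ?a = ?b => change (@eq C a b) end.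

Ltac Defs_to_C :=
  change Defs.Cmul with Cmult in *; change Defs.Cadd with Cplus in *;
  change Defs.Csub with Cminus in *; change Defs.Cdiv with Complex.Cdiv in *;
  change Defs.Cinv with Complex.Cinv in *; change Defs.Copp with Complex.Copp in *;
  change Defs.RtoC with Complex.RtoC in *.

Ltac unfold_C :=
  unfold Cminus, Csin, Ccos, Cplus, Cmult, Complex.Copp, Complex.RtoC, Defs.Re, Defs.Im; simpl.

Lemma C_eq_of_sub (x y : C) : (x - y)%C = 0 -> x = y.
Proof. intro H. replace x with ((x - y) + y)%C by ring. rewrite H. ring. Qed.

Lemma RtoC_neq0 r : r <> 0 -> (r : C) <> 0.
Proof. intros Hr E. apply Hr, RtoC_inj, E. Qed.

Lemma Cmult_neq0_inv (x y : C) : (x * y)%C <> 0 -> x <> 0 /\ y <> 0.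
Proof. intro H; split; intro E; apply H; rewrite E; ring. Qed.

Lemma Cmult_eq0 (x y : C) : (x * y)%C = 0 -> x = 0 \/ y = 0.
Proof.
  intro H. destruct (classic (x = 0)) as [Hx|Hx]; [left; exact Hx|right].
  replace y with (/ x * (x * y))%C by (field; exact Hx). rewrite H. ring.
Qed.

Lemma Cinv_0 : (/ (0 : C))%C = 0.
Proof. unfold Complex.Cinv, Defs.RtoC, Complex.RtoC; simpl. f_equal; unfold Rdiv; ring. Qed.

Lemma Cmod_sqr z : Cmod z * Cmod z = fst z * fst z + snd z * snd z.
Proof.
  unfold Cmod. rewrite sqrt_sqrt; [simpl; ring|].
  apply Rplus_le_le_0_compat; apply pow2_ge_0.
Qed.

Lemma Cmod_le_abs_fst_snd z : Cmod z <= Rabs (fst z) + Rabs (snd z).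
Proof.
  pose proof (Cmod_ge_0 z). pose proof (Rabs_pos (fst z)). pose proof (Rabs_pos (snd z)).
  enough (Cmod z * Cmod z <= (Rabs (fst z) + Rabs (snd z)) ^ 2) by nra.
  rewrite Cmod_sqr. pose proof (Rsqr_abs (fst z)). pose proof (Rsqr_abs (snd z)).
  unfold Rsqr in *. nra.
Qed.

Lemma Rabs_snd_le_Cmod z : Rabs (snd z) <= Cmod z.
Proof. pose proof (Rmax_Cmod z). pose proof (Rmax_r (Rabs (fst z)) (Rabs (snd z))). lra. Qed.

Lemma Cmod_sub_ge a b : Cmod a - Cmod b <= Cmod (a - b).
Proof.
  pose proof (Cmod_triangle (a - b) b). replace (a - b + b)%C with a in H by ring. lra.
Qed.

Lemma Cmod_RtoC_mult r z : 0 <= r -> Cmod (r * z)%C = r * Cmod z.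
Proof. intro Hr. rewrite Cmod_mult, Cmod_R, Rabs_pos_eq; auto. Qed.

(** * The complex sine and cosine *)

Lemma exp_mul_exp_opp x : exp x * exp (- x) = 1.
Proof. rewrite <- exp_plus, Rplus_opp_r. apply exp_0. Qed.

Lemma exp_le_mono x y : x <= y -> exp x <= exp y.
Proof.
  intro H. destruct (Req_dec x y) as [->|]; [lra|]. left. apply exp_increasing. lra.
Qed.

Lemma cosh_plus x y : cosh (x + y) = cosh x * cosh y + sinh x * sinh y.
Proof.
  unfold cosh, sinh. rewrite Ropp_plus_distr, !exp_plus.
  pose proof (exp_mul_exp_opp x). pose proof (exp_mul_exp_opp y). field_simplify. nra.
Qed.

Lemma sinh_plus x y : sinh (x + y) = sinh x * cosh y + cosh x * sinh y.
Proof.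
  unfold cosh, sinh. rewrite Ropp_plus_distr, !exp_plus.
  pose proof (exp_mul_exp_opp x). pose proof (exp_mul_exp_opp y). field_simplify. nra.
Qed.

Lemma cosh_sq_sub_sinh_sq x : cosh x * cosh x - sinh x * sinh x = 1.
Proof. unfold cosh, sinh. pose proof (exp_mul_exp_opp x). field_simplify. nra. Qed.

Lemma cosh_opp x : cosh (- x) = cosh x.
Proof. unfold cosh. rewrite Ropp_involutive. field. Qed.

Lemma sinh_opp x : sinh (- x) = - sinh x.
Proof. unfold sinh. rewrite Ropp_involutive. field. Qed.

Lemma cosh_pos x : 0 < cosh x.
Proof. unfold cosh. pose proof (exp_pos x); pose proof (exp_pos (- x)). lra. Qed.

Lemma sinh_eq0 x : sinh x = 0 -> x = 0.
Proof.
  intro H. destruct (Rtotal_order x 0) as [X|[X|X]]; auto;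
  pose proof (sinh_lt _ _ X); rewrite sinh_0 in *; lra.
Qed.

Lemma Csin_add u v : Csin (u + v)%C = (Csin u * Ccos v + Ccos u * Csin v)%C.
Proof.
  destruct u as [x y], v as [x' y']. unfold_C.
  rewrite sin_plus, cosh_plus, cos_plus, sinh_plus. f_equal; ring.
Qed.

Lemma Ccos_add u v : Ccos (u + v)%C = (Ccos u * Ccos v - Csin u * Csin v)%C.
Proof.
  destruct u as [x y], v as [x' y']. unfold_C.
  rewrite sin_plus, cosh_plus, cos_plus, sinh_plus. f_equal; ring.
Qed.

Lemma Csin_opp u : Csin (- u)%C = (- Csin u)%C.
Proof.
  destruct u as [x y]. unfold_C. rewrite sin_neg, cos_neg, cosh_opp, sinh_opp. f_equal; ring.
Qed.

Lemma Ccos_opp u : Ccos (- u)%C = Ccos u.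
Proof.
  destruct u as [x y]. unfold_C. rewrite sin_neg, cos_neg, cosh_opp, sinh_opp. f_equal; ring.
Qed.

Lemma Csin_sq_add_Ccos_sq u : (Csin u * Csin u + Ccos u * Ccos u)%C = 1.
Proof.
  destruct u as [x y]. unfold_C.
  pose proof (cosh_sq_sub_sinh_sq y). pose proof (sin2_cos2 x). unfold Rsqr in *. f_equal; nra.
Qed.

Lemma Csin_double u : Csin (2 * u)%C = (2 * (Csin u * Ccos u))%C.
Proof.
  replace (2 * u)%C with (u + u)%C by (toC; ring). rewrite Csin_add. toC; ring.
Qed.

Lemma Ccos_double u : Ccos (2 * u)%C = (Ccos u * Ccos u - Csin u * Csin u)%C.
Proof. replace (2 * u)%C with (u + u)%C by (toC; ring). apply Ccos_add. Qed.

Lemma Ccos_neq0 w : (forall k : Z, w <> RtoC ((IZR k + 1/2) * PI)) -> Ccos w <> RtoC 0.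
Proof.
  intros Hw E. destruct w as [x y]. unfold_C. injection E as E1 E2. pose proof (cosh_pos y).
  assert (Hc : cos x = 0) by (apply Rmult_integral in E1; destruct E1; auto; lra).
  assert (Hs : sin x <> 0).
  { intro X. pose proof (sin2_cos2 x). unfold Rsqr in *. rewrite X, Hc in *. lra. }
  assert (Hy : y = 0).
  { apply sinh_eq0. assert (E3 : sin x * sinh y = 0) by lra.
    apply Rmult_integral in E3; destruct E3; [contradiction|auto]. }
  destruct (cos_eq_0_0 x Hc) as [k Hk]. apply (Hw k). subst. unfold Defs.RtoC. f_equal. field.
Qed.

Lemma RtoC_sin_sq_add_cos_sq c : (sin c * sin c + cos c * cos c)%C = 1.
Proof.
  rewrite <- !RtoC_mult, <- RtoC_plus. f_equal.
  pose proof (sin2_cos2 c). unfold Rsqr in *. lra.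
Qed.

Fixpoint csum (f : nat -> C) (n : nat) : C :=
  match n with O => 0 | S n => (csum f n + f n)%C end.

Lemma csum_ext f g n : (forall k, (k < n)%nat -> f k = g k) -> csum f n = csum g n.
Proof.
  induction n as [|n IH]; simpl; intros H; auto.
  rewrite IH, H by (intros; try apply H; lia). reflexivity.
Qed.

Lemma csum_add f g n : csum (fun k => f k + g k)%C n = (csum f n + csum g n)%C.
Proof. induction n as [|n IH]; simpl. ring. rewrite IH. ring. Qed.

Lemma csum_sub f g n : csum (fun k => f k - g k)%C n = (csum f n - csum g n)%C.
Proof. induction n as [|n IH]; simpl. ring. rewrite IH. ring. Qed.

Lemma csum_mult_l c f n : csum (fun k => c * f k)%C n = (c * csum f n)%C.
Proof. induction n as [|n IH]; simpl. ring. rewrite IH. ring. Qed.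

Lemma csum_split f a b : csum f (a + b) = (csum f a + csum (fun k => f (a + k)%nat) b)%C.
Proof.
  induction b as [|b IH]; simpl. rewrite Nat.add_0_r. ring.
  rewrite Nat.add_succ_r. simpl. rewrite IH. ring.
Qed.

Lemma csum_rev f n : csum f n = csum (fun k => f (n - 1 - k)%nat) n.
Proof.
  induction n as [|n IH]. reflexivity.
  replace (S n) with (1 + n)%nat at 2 by lia. rewrite csum_split. simpl.
  rewrite IH, Nat.sub_0_r.
  rewrite (csum_ext _ (fun k => f (n - S k)%nat)) by (intros; f_equal; lia).
  replace (n - 0)%nat with n by lia. ring.
Qed.

Lemma csum_pair f n : csum (fun k => f k + f (2 * n - 1 - k)%nat)%C n = csum f (2 * n).
Proof.
  rewrite csum_add. replace (2 * n)%nat with (n + n)%nat by lia. rewrite csum_split.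
  f_equal. rewrite (csum_rev (fun k => f (n + k)%nat)). apply csum_ext. intros; f_equal; lia.
Qed.

Lemma csum_sub_split (g T : nat -> C) K N n : (K <= N)%nat -> (N <= n)%nat ->
  (csum g n - csum T N)%C
  = (csum (fun k => g k - T k)%C K
     + csum (fun j => g (K + j)%nat - T (K + j)%nat)%C (n - K)
     + csum (fun j => T (N + j)%nat) (n - N))%C.
Proof.
  intros H1 H2. rewrite !csum_sub.
  assert (Eg : csum g n = (csum g K + csum (fun j => g (K + j)%nat) (n - K))%C).
  { replace n with (K + (n - K))%nat at 1 by lia. apply csum_split. }
  assert (ETK : csum T n = (csum T K + csum (fun j => T (K + j)%nat) (n - K))%C).
  { replace n with (K + (n - K))%nat at 1 by lia. apply csum_split. }
  assert (ETN : csum T n = (csum T N + csum (fun j => T (N + j)%nat) (n - N))%C).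
  { replace n with (N + (n - N))%nat at 1 by lia. apply csum_split. }
  rewrite Eg. apply C_eq_of_sub.
  transitivity ((csum T n - (csum T N + csum (fun j => T (N + j)%nat) (n - N)))
                - (csum T n - (csum T K + csum (fun j => T (K + j)%nat) (n - K))))%C.
  - ring.
  - rewrite <- ETK, <- ETN. ring.
Qed.

Lemma Cmod_csum_le_telescope (f : nat -> C) (A : R) K len :
  (1 <= K)%nat -> 0 <= A ->
  (forall j, (j < len)%nat -> Cmod (f j) <= A / (INR (K + j) * (INR (K + j) + 1))) ->
  Cmod (csum f len) <= A / INR K.
Proof.
  intros HK HA Hf.
  assert (HK' : 1 <= INR K) by (apply (le_INR 1); lia).
  enough (Cmod (csum f len) <= A / INR K - A / INR (K + len)).
  { assert (0 <= A / INR (K + len)) by (apply Rdiv_le_0_compat; [lra|apply lt_0_INR; lia]). lra. }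
  induction len as [|len IH]; simpl.
  - rewrite Nat.add_0_r, Cmod_0. lra.
  - eapply Rle_trans; [apply Cmod_triangle|].
    pose proof (IH (fun j Hj => Hf j ltac:(lia))). pose proof (Hf len ltac:(lia)).
    replace (K + S len)%nat with (S (K + len)) by lia. rewrite S_INR.
    assert (0 < INR (K + len)) by (apply lt_0_INR; lia).
    replace (A / INR K - A / (INR (K + len) + 1))
      with (A / INR K - A / INR (K + len) + A / (INR (K + len) * (INR (K + len) + 1)))
      by (field; lra).
    lra.
Qed.

(** * A finite partial fraction expansion of the tangent *)

Definition sin_sq_gap (u : C) (c : R) : C := (sin c * sin c - Csin u * Csin u)%C.

Definition dup_frac (u : C) (c : R) : C := (Csin (2 * u) / sin_sq_gap u c)%C.

Lemma sin_sq_gap_double u c :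
  sin_sq_gap (2 * u)%C (2 * c) = (4 * (sin_sq_gap u c * sin_sq_gap u (PI / 2 - c)))%C.
Proof.
  unfold sin_sq_gap. rewrite Csin_double, sin_2a, sin_shift, !RtoC_mult.
  pose proof (Csin_sq_add_Ccos_sq u) as E1. pose proof (RtoC_sin_sq_add_cos_sq c) as E2.
  apply C_eq_of_sub.
  transitivity (4 * (Csin u * Csin u) * ((sin c * sin c + cos c * cos c)
                  - (Csin u * Csin u + Ccos u * Ccos u)))%C.
  - ring.
  - rewrite E1, E2. ring.
Qed.

Lemma sin_sq_gap_add_complement u c :
  (sin_sq_gap u c + sin_sq_gap u (PI / 2 - c))%C = Ccos (2 * u)%C.
Proof.
  unfold sin_sq_gap. rewrite Ccos_double, sin_shift.
  pose proof (Csin_sq_add_Ccos_sq u) as E1. pose proof (RtoC_sin_sq_add_cos_sq c) as E2.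
  apply C_eq_of_sub.
  transitivity ((sin c * sin c + cos c * cos c) - (Csin u * Csin u + Ccos u * Ccos u))%C.
  - ring.
  - rewrite E1, E2. ring.
Qed.

Lemma dup_frac_double u c :
  sin_sq_gap u c <> 0 -> sin_sq_gap u (PI / 2 - c) <> 0 ->
  dup_frac (2 * u)%C (2 * c) = (/ 2 * (dup_frac u c + dup_frac u (PI / 2 - c)))%C.
Proof.
  intros H1 H2. unfold dup_frac.
  rewrite sin_sq_gap_double, Csin_double, Csin_double, <- (sin_sq_gap_add_complement u c).
  field. auto.
Qed.

Definition Ctan (w : C) : C := (Csin w / Ccos w)%C.

Definition beta (k : nat) : R := (INR k + 1 / 2) * PI.

Definition dyad (m : nat) : R := / 2 ^ S m.

Lemma dyad_pos m : 0 < dyad m.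
Proof. apply Rinv_0_lt_compat, pow_lt. lra. Qed.

Lemma dyad_neq0 m : dyad m <> 0.
Proof. pose proof (dyad_pos m). lra. Qed.

Lemma dyad_S m : dyad m = 2 * dyad (S m).
Proof. unfold dyad. change (2 ^ S (S m)) with (2 * 2 ^ S m). field. apply pow_nonzero. lra. Qed.

Lemma dyad_beta_reflect m k : (k < 2 ^ m)%nat ->
  PI / 2 - dyad (S m) * beta k = dyad (S m) * beta (2 * 2 ^ m - 1 - k).
Proof.
  intro Hk. unfold dyad, beta.
  rewrite !minus_INR, mult_INR, pow_INR by lia.
  replace (INR 2) with 2 by (simpl; ring). simpl pow. rewrite INR_1.
  field. apply pow_nonzero. lra.
Qed.

Lemma tan_dup_frac_base w : Ccos w <> RtoC 0 ->
  sin_sq_gap (dyad 0 * w)%C (dyad 0 * beta 0) <> 0 /\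
  Ctan w = (dyad 0 * csum (fun k => dup_frac (dyad 0 * w)%C (dyad 0 * beta k)) 1)%C.
Proof.
  intro Hc.
  assert (Ew : w = (2 * (dyad 0 * w))%C).
  { unfold dyad. simpl. rewrite Cmult_assoc, <- RtoC_mult. replace (2 * / (2 * 1)) with 1 by field.
    symmetry; apply Cmult_1_l. }
  assert (Eb : dyad 0 * beta 0 = PI / 4) by (unfold dyad, beta; simpl; field).
  assert (Es : (2 * (sin (PI / 4) * sin (PI / 4)))%C = 1).
  { rewrite <- !RtoC_mult, sin_PI4. f_equal. field_simplify.
    - rewrite pow2_sqrt; lra.
    - pose proof (sqrt_lt_R0 2). lra. }
  simpl csum. rewrite Eb. set (u := (dyad 0 * w)%C) in *.
  assert (Ecos : Ccos w = (2 * sin_sq_gap u (PI / 4))%C).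
  { rewrite Ew, Ccos_double. unfold sin_sq_gap.
    pose proof (Csin_sq_add_Ccos_sq u) as E1. apply C_eq_of_sub.
    transitivity ((Csin u * Csin u + Ccos u * Ccos u) - 1
                  - (2 * (sin (PI / 4) * sin (PI / 4)) - 1))%C.
    - ring.
    - rewrite E1, Es. ring. }
  rewrite Ecos in Hc. destruct (Cmult_neq0_inv _ _ Hc) as [_ Hg]. split; [exact Hg|].
  unfold Ctan, dup_frac. rewrite Ecos, <- Ew.
  replace (dyad 0) with (/ 2) by (unfold dyad; simpl; field). rewrite RtoC_inv.
  toC. field. exact Hg. lra.
Qed.

Lemma dup_frac_halve m w k : (k < 2 ^ m)%nat ->
  sin_sq_gap (dyad m * w)%C (dyad m * beta k) <> 0 ->
  let t := dyad (S m) in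
  sin_sq_gap (t * w)%C (t * beta k) <> 0 /\
  sin_sq_gap (t * w)%C (t * beta (2 * 2 ^ m - 1 - k)) <> 0 /\
  dup_frac (dyad m * w)%C (dyad m * beta k)
  = (/ 2 * (dup_frac (t * w)%C (t * beta k)
            + dup_frac (t * w)%C (t * beta (2 * 2 ^ m - 1 - k))))%C.
Proof.
  intros Hk Hg t.
  assert (Eu : (dyad m * w)%C = (2 * (t * w))%C).
  { unfold t. rewrite dyad_S, RtoC_mult. toC. ring. }
  assert (Ec : dyad m * beta k = 2 * (t * beta k)) by (unfold t; rewrite dyad_S; ring).
  rewrite Eu, Ec in Hg |- *. rewrite sin_sq_gap_double in Hg.
  destruct (Cmult_neq0_inv _ _ Hg) as [_ Hg'].
  destruct (Cmult_neq0_inv _ _ Hg') as [G1 G2].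
  unfold t. rewrite <- dyad_beta_reflect by exact Hk.
  split; [|split]; auto. apply dup_frac_double; auto.
Qed.

Lemma tan_dup_frac_sum m w : Ccos w <> RtoC 0 ->
  (forall k, (k < 2 ^ m)%nat -> sin_sq_gap (dyad m * w)%C (dyad m * beta k) <> 0) /\
  Ctan w = (dyad m * csum (fun k => dup_frac (dyad m * w)%C (dyad m * beta k)) (2 ^ m))%C.
Proof.
  intro Hc. induction m as [|m [Hn Ht]].
  - destruct (tan_dup_frac_base w Hc) as [H1 H2]. split; [|exact H2].
    intros k Hk. replace k with 0%nat by (simpl in Hk; lia). exact H1.
  - pose proof (fun k Hk => dup_frac_halve m w k Hk (Hn k Hk)) as Hk. cbv zeta in Hk.
    set (n := (2 ^ m)%nat) in *. change (2 ^ S m)%nat with (2 * n)%nat.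
    set (t := dyad (S m)) in *.
    split.
    + intros j Hj. destruct (Nat.lt_ge_cases j n) as [Hjn|Hjn].
      * apply Hk; auto.
      * destruct (Hk (2 * n - 1 - j)%nat ltac:(lia)) as [_ [G _]].
        replace (2 * n - 1 - (2 * n - 1 - j))%nat with j in G by lia. exact G.
    + rewrite Ht, (csum_ext _ (fun k => (/ 2 * (dup_frac (t * w)%C (t * beta k)
                 + dup_frac (t * w)%C (t * beta (2 * n - 1 - k))))%C)).
      2: { intros k Hk'. apply Hk, Hk'. }
      rewrite csum_mult_l, (csum_pair (fun k => dup_frac (t * w)%C (t * beta k))).
      unfold t. rewrite dyad_S, RtoC_mult. toC. field.
Qed.

Lemma Rabs_sin_le_pos x : 0 <= x -> Rabs (sin x) <= x.
Proof.
  intro Hx. destruct (Req_dec x 0) as [->|Hx0]; [rewrite sin_0, Rabs_R0; lra|].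
  pose proof (sin_lt_x x ltac:(lra)). pose proof (SIN_bound x). pose proof PI2_3_2.
  apply Rabs_le. split; [|lra].
  destruct (Rle_lt_dec 1 x); [lra|]. assert (0 < sin x) by (apply sin_gt_0; lra). lra.
Qed.

Lemma Rabs_sin_le x : Rabs (sin x) <= Rabs x.
Proof.
  destruct (Rle_lt_dec 0 x).
  - rewrite (Rabs_pos_eq x) by lra. now apply Rabs_sin_le_pos.
  - rewrite <- Rabs_Ropp, <- sin_neg, (Rabs_left x) by lra. apply Rabs_sin_le_pos. lra.
Qed.

Lemma sinh_le_pos y : 0 <= y <= 2 -> 0 <= sinh y <= 9 * y.
Proof.
  intros [H0 H2]. unfold sinh.
  assert (E2 : exp (-2 * y) = exp (- y) * exp (- y)) by (rewrite <- exp_plus; f_equal; ring).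
  assert (Hle : exp (- y) <= exp y) by (apply exp_le_mono; lra).
  assert (H9 : exp y <= 9).
  { apply Rle_trans with (exp 2); [apply exp_le_mono; lra|].
    replace 2 with (1 + 1) by ring. rewrite exp_plus.
    pose proof exp_le_3. pose proof (exp_pos 1). nra. }
  pose proof (exp_ineq1_le (-2 * y)). pose proof (exp_mul_exp_opp y).
  pose proof (exp_pos y). pose proof (exp_pos (- y)). split; nra.
Qed.

Lemma Rabs_sinh_le y : Rabs y <= 2 -> Rabs (sinh y) <= 9 * Rabs y.
Proof.
  intro H. destruct (Rle_lt_dec 0 y).
  - rewrite Rabs_pos_eq in H by lra. pose proof (sinh_le_pos y ltac:(lra)).
    rewrite !Rabs_pos_eq by lra. lra.
  - rewrite Rabs_left in H by lra. pose proof (sinh_le_pos (- y) ltac:(lra)).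
    rewrite sinh_opp in *. rewrite (Rabs_left y), Rabs_left1 by lra. lra.
Qed.

Lemma Cmod_Csin_le z : Rabs (snd z) <= 2 -> Cmod (Csin z) <= 9 * Cmod z.
Proof.
  intro H. pose proof (Cmod_ge_0 z). pose proof (Cmod_ge_0 (Csin z)).
  enough (Cmod (Csin z) * Cmod (Csin z) <= 81 * (Cmod z * Cmod z)) by nra.
  rewrite !Cmod_sqr. destruct z as [x y]. unfold Csin, Defs.Re, Defs.Im. simpl in *.
  pose proof (Rabs_sin_le x). pose proof (Rabs_sinh_le y H).
  pose proof (cosh_sq_sub_sinh_sq y). pose proof (sin2_cos2 x). unfold Rsqr in *.
  assert (sin x * sin x <= x * x).
  { pose proof (Rsqr_abs (sin x)). pose proof (Rsqr_abs x). unfold Rsqr in *.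
    pose proof (Rabs_pos (sin x)). nra. }
  assert (sinh y * sinh y <= 81 * (y * y)).
  { pose proof (Rsqr_abs (sinh y)). pose proof (Rsqr_abs y). unfold Rsqr in *.
    pose proof (Rabs_pos (sinh y)). nra. }
  nra.
Qed.

Lemma sin_ge_third b : 0 <= b <= 2 -> b / 3 <= sin b.
Proof.
  intros [H0 H2]. pose proof PI2_3_2. destruct (SIN b H0 ltac:(lra)) as [Hs _].
  unfold sin_lb, sin_approx, sin_term in Hs. simpl in Hs. field_simplify in Hs.
  assert (b * b <= 4) by nra.
  assert (b ^ 3 <= 4 * b) by (simpl; nra).
  assert (b ^ 7 <= 42 * b ^ 5).
  { replace (b ^ 7) with (b ^ 5 * (b * b)) by ring. pose proof (pow_le b 5 H0). nra. }
  pose proof (pow_le b 5 H0). lra.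
Qed.

Definition pole_term (w : C) (k : nat) : C := (2 * w / (beta k * beta k - w * w))%C.

Lemma beta_pos k : 0 < beta k.
Proof. unfold beta. pose proof (pos_INR k). pose proof PI_RGT_0. nra. Qed.

Lemma beta_ge k : 3 * (INR k + 1 / 2) <= beta k.
Proof. unfold beta. pose proof (pos_INR k). pose proof PI2_3_2. nra. Qed.

Lemma beta_sq_ge k : 9 * (INR k * (INR k + 1)) <= beta k * beta k.
Proof. pose proof (beta_ge k). pose proof (pos_INR k). nra. Qed.

Lemma div_beta_sq_le A k : (1 <= k)%nat -> 0 <= A ->
  A / (beta k * beta k) <= A / 9 / (INR k * (INR k + 1)).
Proof.
  intros Hk HA. pose proof (beta_sq_ge k).
  assert (0 < INR k) by (apply lt_0_INR; lia).
  unfold Rdiv. rewrite Rmult_assoc, <- Rinv_mult. apply Rmult_le_compat_l; [lra|].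
  apply Rinv_le_contravar; nra.
Qed.

Lemma Cmod_dyad_dup_frac_le m k w : (k < 2 ^ m)%nat -> 39 * Cmod w <= beta k ->
  Cmod (dyad m * dup_frac (dyad m * w)%C (dyad m * beta k))%C
  <= 324 * Cmod w / (beta k * beta k).
Proof.
  intros Hk Hw. pose proof (dyad_pos m) as Ht. pose proof (beta_pos k) as Bp.
  pose proof (Cmod_ge_0 w) as Wp. pose proof PI_4 as P4.
  set (d := (dyad m * w)%C). set (b := dyad m * beta k).
  assert (Ed : Cmod d = dyad m * Cmod w) by (apply Cmod_RtoC_mult; lra).
  assert (Hb2 : b <= PI / 2).
  { unfold b, dyad, beta. apply le_INR in Hk. rewrite S_INR, pow_INR in Hk.
    replace (INR 2) with 2 in Hk by (simpl; ring). simpl pow.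
    apply Rmult_le_reg_l with (2 * 2 ^ m); [pose proof (pow_lt 2 m); lra|].
    field_simplify; [|apply pow_nonzero; lra]. pose proof PI_RGT_0. nra. }
  assert (Hb0 : 0 < b) by (unfold b; nra).
  assert (Hdb : 39 * Cmod d <= b) by (rewrite Ed; unfold b; nra).
  pose proof (Cmod_ge_0 d) as Dp.
  assert (H1 : Cmod (Csin (2 * d)%C) <= 18 * Cmod d).
  { assert (E2 : Cmod (2 * d)%C = 2 * Cmod d) by (apply Cmod_RtoC_mult; lra).
    eapply Rle_trans.
    { apply Cmod_Csin_le. eapply Rle_trans; [apply Rabs_snd_le_Cmod|]. rewrite E2. lra. }
    rewrite E2. lra. }
  assert (H2 : Cmod (Csin d) <= 9 * Cmod d).
  { apply Cmod_Csin_le. eapply Rle_trans; [apply Rabs_snd_le_Cmod|]. lra. }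
  assert (H3 : b / 3 <= sin b) by (apply sin_ge_third; lra).
  assert (H4 : b * b / 18 <= Cmod (sin_sq_gap d b)).
  { unfold sin_sq_gap. eapply Rle_trans; [|apply Cmod_sub_ge].
    rewrite <- RtoC_mult, Cmod_R, Cmod_mult, Rabs_pos_eq by nra.
    pose proof (Cmod_ge_0 (Csin d)). nra. }
  assert (Hg : sin_sq_gap d b <> 0) by (intro E; rewrite E, Cmod_0 in H4; nra).
  unfold dup_frac. rewrite Cmod_RtoC_mult, Cmod_div by lra || exact Hg.
  apply Rle_trans with (dyad m * (18 * Cmod d / (b * b / 18))).
  - apply Rmult_le_compat_l; [lra|]. unfold Rdiv.
    apply Rmult_le_compat; try lra; [apply Cmod_ge_0 | left; apply Rinv_0_lt_compat; nra |].
    apply Rinv_le_contravar; nra.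
  - right. rewrite Ed. unfold b. field. lra.
Qed.

Lemma Cmod_pole_term_le w k : 39 * Cmod w <= beta k ->
  Cmod (pole_term w k) <= 4 * Cmod w / (beta k * beta k).
Proof.
  intro Hw. pose proof (beta_pos k) as Bp. pose proof (Cmod_ge_0 w) as Wp.
  assert (H4 : beta k * beta k / 2 <= Cmod (beta k * beta k - w * w)%C).
  { eapply Rle_trans; [|apply Cmod_sub_ge].
    rewrite <- RtoC_mult, Cmod_R, Cmod_mult, Rabs_pos_eq by nra. nra. }
  assert (Hd : (beta k * beta k - w * w)%C <> 0) by (intro E; rewrite E, Cmod_0 in H4; nra).
  unfold pole_term. rewrite Cmod_div, Cmod_RtoC_mult by lra || exact Hd.
  apply Rle_trans with (2 * Cmod w / (beta k * beta k / 2)).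
  - unfold Rdiv. apply Rmult_le_compat_l; [lra|]. apply Rinv_le_contravar; nra.
  - right. field. lra.
Qed.

Lemma Cmod_dyad_dup_frac_sub_pole_le m k w :
  (k < 2 ^ m)%nat -> (1 <= k)%nat -> 39 * Cmod w <= beta k ->
  Cmod (dyad m * dup_frac (dyad m * w)%C (dyad m * beta k) - pole_term w k)%C
  <= 37 * Cmod w / (INR k * (INR k + 1)).
Proof.
  intros Hk Hk1 Hw. pose proof (Cmod_ge_0 w).
  eapply Rle_trans; [apply Cmod_triangle|]. rewrite Cmod_opp.
  pose proof (Cmod_dyad_dup_frac_le m k w Hk Hw). pose proof (Cmod_pole_term_le w k Hw).
  pose proof (div_beta_sq_le (328 * Cmod w) k Hk1 ltac:(lra)).
  assert (0 < INR k) by (apply lt_0_INR; lia).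
  assert (328 * Cmod w / 9 / (INR k * (INR k + 1)) <= 37 * Cmod w / (INR k * (INR k + 1))).
  { unfold Rdiv. apply Rmult_le_compat_r; [left; apply Rinv_0_lt_compat; nra|lra]. }
  assert (324 * Cmod w / (beta k * beta k) + 4 * Cmod w / (beta k * beta k)
          = 328 * Cmod w / (beta k * beta k)) by (field; pose proof (beta_pos k); lra).
  lra.
Qed.

Lemma Cmod_pole_term_le_telescope w k : (1 <= k)%nat -> 39 * Cmod w <= beta k ->
  Cmod (pole_term w k) <= Cmod w / (INR k * (INR k + 1)).
Proof.
  intros Hk1 Hw. pose proof (Cmod_ge_0 w).
  pose proof (Cmod_pole_term_le w k Hw). pose proof (div_beta_sq_le (4 * Cmod w) k Hk1 ltac:(lra)).
  assert (0 < INR k) by (apply lt_0_INR; lia).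
  assert (4 * Cmod w / 9 / (INR k * (INR k + 1)) <= Cmod w / (INR k * (INR k + 1))).
  { unfold Rdiv. apply Rmult_le_compat_r; [left; apply Rinv_0_lt_compat; nra|lra]. }
  lra.
Qed.

Lemma tail_cutoff W eps : 0 <= W -> 0 < eps ->
  exists K, (1 <= K)%nat /\ 38 * W / INR K <= eps / 2 /\
            forall k, (K <= k)%nat -> 39 * W <= beta k.
Proof.
  intros Wp He.
  assert (HW : 0 <= 76 * W / eps) by (apply Rdiv_le_0_compat; lra).
  destruct (nfloor_ex (13 * W + 76 * W / eps) ltac:(lra)) as [K0 HK0].
  exists (S K0). rewrite S_INR. split; [lia|split].
  - assert (76 * W <= eps * (INR K0 + 1)).
    { replace (76 * W) with (76 * W / eps * eps) by (field; lra). nra. }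
    apply Rmult_le_reg_r with (INR K0 + 1); [lra|]. field_simplify; lra.
  - intros k Hk. pose proof (beta_ge k). apply le_INR in Hk. rewrite S_INR in Hk. lra.
Qed.

(** * Limits of complex sequences *)

Definition Clim (u : nat -> C) (L : C) : Prop :=
  is_lim_seq (fun n => fst (u n)) (fst L) /\ is_lim_seq (fun n => snd (u n)) (snd L).

Lemma Clim_ext u v L : (forall n, u n = v n) -> Clim u L -> Clim v L.
Proof.
  intros E [H1 H2]; split; eapply is_lim_seq_ext; try eassumption; intro n; simpl; rewrite E; auto.
Qed.

Lemma Clim_const L : Clim (fun _ => L) L.
Proof. split; apply is_lim_seq_const. Qed.

Lemma Clim_RtoC (r : nat -> R) (l : R) : is_lim_seq r l -> Clim (fun n => RtoC (r n)) (RtoC l).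
Proof. intro H; split; [exact H | apply is_lim_seq_const]. Qed.

Lemma Clim_plus u v L1 L2 : Clim u L1 -> Clim v L2 -> Clim (fun n => u n + v n)%C (L1 + L2)%C.
Proof. intros [a b] [c d]; split; simpl; apply is_lim_seq_plus'; auto. Qed.

Lemma Clim_opp u L : Clim u L -> Clim (fun n => - u n)%C (- L)%C.
Proof. intros [a b]; split; simpl; apply (proj1 (is_lim_seq_opp _ (Finite _))); auto. Qed.

Lemma Clim_minus u v L1 L2 : Clim u L1 -> Clim v L2 -> Clim (fun n => u n - v n)%C (L1 - L2)%C.
Proof. intros Hu Hv. apply Clim_plus; auto. apply Clim_opp; auto. Qed.

Lemma Clim_mult u v L1 L2 : Clim u L1 -> Clim v L2 -> Clim (fun n => u n * v n)%C (L1 * L2)%C.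
Proof.
  intros [a b] [c d]; split; simpl.
  - apply is_lim_seq_minus'; apply is_lim_seq_mult'; auto.
  - apply is_lim_seq_plus'; apply is_lim_seq_mult'; auto.
Qed.

Lemma Clim_inv u L : Clim u L -> L <> 0 -> Clim (fun n => / u n)%C (/ L)%C.
Proof.
  intros [a b] HL.
  assert (Hd : fst L ^ 2 + snd L ^ 2 <> 0).
  { intro E. apply HL. destruct L as [x y]; simpl in E.
    assert (x = 0) by nra. assert (y = 0) by nra. subst. reflexivity. }
  assert (D : is_lim_seq (fun n => fst (u n) ^ 2 + snd (u n) ^ 2) (fst L ^ 2 + snd L ^ 2)).
  { apply is_lim_seq_plus'; simpl; rewrite Rmult_1_r;
      eapply is_lim_seq_ext; try (apply is_lim_seq_mult'; eassumption); intro n; simpl; ring. }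
  split; simpl; apply is_lim_seq_div'; auto. apply (proj1 (is_lim_seq_opp _ (Finite _))); auto.
Qed.

Lemma Clim_div u v L1 L2 : Clim u L1 -> Clim v L2 -> L2 <> 0 ->
  Clim (fun n => u n / v n)%C (L1 / L2)%C.
Proof. intros. apply Clim_mult; auto. apply Clim_inv; auto. Qed.

Lemma Clim_csum (f : nat -> nat -> C) (L : nat -> C) K :
  (forall k, (k < K)%nat -> Clim (fun m => f m k) (L k)) ->
  Clim (fun m => csum (f m) K) (csum L K).
Proof.
  induction K as [|K IH]; intros H; simpl; [apply Clim_const|].
  apply Clim_plus; [apply IH; intros; apply H|apply H]; lia.
Qed.

Lemma Clim_0_Cmod_le u : Clim u 0 ->
  forall eps, 0 < eps -> exists N, forall n, (N <= n)%nat -> Cmod (u n) <= eps.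
Proof.
  intros [a b] eps He. apply is_lim_seq_Reals in a, b. simpl in a, b.
  destruct (a (eps / 2) ltac:(lra)) as [N1 H1]. destruct (b (eps / 2) ltac:(lra)) as [N2 H2].
  exists (max N1 N2). intros n Hn. eapply Rle_trans; [apply Cmod_le_abs_fst_snd|].
  specialize (H1 n ltac:(lia)). specialize (H2 n ltac:(lia)).
  unfold R_dist in *. rewrite Rminus_0_r in *. lra.
Qed.

Lemma is_lim_seq_dyad : is_lim_seq dyad 0.
Proof.
  apply is_lim_seq_ext with (u := fun m => / 2 * (/ 2) ^ m).
  - intro m. unfold dyad. simpl. rewrite pow_inv, Rinv_mult. reflexivity.
  - replace 0 with (/ 2 * 0) by ring. apply is_lim_seq_mult'; [apply is_lim_seq_const|].
    apply is_lim_seq_geom. rewrite Rabs_pos_eq; lra.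
Qed.

Lemma is_lim_seq_diff_quot (f : R -> R) (l : R) (u : nat -> R) :
  derivable_pt_lim f 0 l -> f 0 = 0 -> is_lim_seq u 0 -> (forall n, u n <> 0) ->
  is_lim_seq (fun n => f (u n) / u n) l.
Proof.
  intros Hd H0 Hu Hn. apply is_lim_seq_Reals. apply is_lim_seq_Reals in Hu.
  intros eps He. destruct (Hd eps He) as [del Hdel].
  destruct (Hu del (cond_pos del)) as [N HN]. exists N. intros n Hn'.
  specialize (HN n Hn'). unfold R_dist in *. rewrite Rminus_0_r in HN.
  specialize (Hdel (u n) (Hn n) HN). rewrite Rplus_0_l, H0, Rminus_0_r in Hdel. exact Hdel.
Qed.

Lemma is_lim_seq_dyad_scaled (g : R -> R) a :
  continuity_pt g 0 -> is_lim_seq (fun m => g (dyad m * a)) (g 0).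
Proof.
  intro Hg. apply is_lim_seq_continuous; [exact Hg|].
  replace 0 with (0 * a) by ring.
  apply is_lim_seq_mult'; [apply is_lim_seq_dyad|apply is_lim_seq_const].
Qed.

Lemma Csin_scaled_lim w : Clim (fun m => ((/ dyad m)%R * Csin (dyad m * w))%C) w.
Proof.
  destruct w as [x y].
  apply Clim_ext with (u := fun m => (sin (dyad m * x) * cosh (dyad m * y) / dyad m,
                                      cos (dyad m * x) * sinh (dyad m * y) / dyad m)).
  { intro m. unfold Csin, Cmult, Complex.RtoC, Defs.Re, Defs.Im; simpl.
    f_equal; (replace (dyad m * x - 0 * y) with (dyad m * x) by ring;
              replace (dyad m * y + 0 * x) with (dyad m * y) by ring; field; apply dyad_neq0). }
  split; simpl.
  - apply (is_lim_seq_diff_quot (fun t => sin (t * x) * cosh (t * y)));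
      [|rewrite !Rmult_0_l, sin_0; ring|apply is_lim_seq_dyad|apply dyad_neq0].
    apply is_derive_Reals. unfold cosh. auto_derive; auto.
    rewrite !Rmult_0_l, sin_0, cos_0, Ropp_0, exp_0. field.
  - apply (is_lim_seq_diff_quot (fun t => cos (t * x) * sinh (t * y)));
      [|rewrite !Rmult_0_l, sinh_0; ring|apply is_lim_seq_dyad|apply dyad_neq0].
    apply is_derive_Reals. unfold sinh. auto_derive; auto.
    rewrite !Rmult_0_l, sin_0, cos_0, Ropp_0, exp_0. field.
Qed.

Lemma Ccos_scaled_lim w : Clim (fun m => Ccos (dyad m * w)%C) 1.
Proof.
  destruct w as [x y].
  assert (Lc : forall a, is_lim_seq (fun m => cos (dyad m * a)) 1).
  { intro a. rewrite <- cos_0. apply is_lim_seq_dyad_scaled, continuity_cos. }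
  assert (Ls : forall a, is_lim_seq (fun m => sin (dyad m * a)) 0).
  { intro a. rewrite <- sin_0. apply is_lim_seq_dyad_scaled, continuity_sin. }
  assert (Lch : forall a, is_lim_seq (fun m => cosh (dyad m * a)) 1).
  { intro a. rewrite <- cosh_0.
    apply is_lim_seq_dyad_scaled, derivable_continuous_pt, derivable_pt_cosh. }
  assert (Lsh : forall a, is_lim_seq (fun m => sinh (dyad m * a)) 0).
  { intro a. rewrite <- sinh_0.
    apply is_lim_seq_dyad_scaled, derivable_continuous_pt, derivable_pt_sinh. }
  apply Clim_ext with (u := fun m => Ccos (dyad m * x, dyad m * y)).
  { intro m. f_equal. unfold Cmult, Complex.RtoC; simpl. f_equal; ring. }
  unfold Ccos, Defs.Re, Defs.Im. split; simpl.
  - replace 1 with (1 * 1) by ring. apply is_lim_seq_mult'; auto.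
  - replace 0 with (- (0 * 0)) by ring.
    apply (proj1 (is_lim_seq_opp _ (Finite _))). apply is_lim_seq_mult'; auto.
Qed.

Lemma sin_scaled_lim c : is_lim_seq (fun m => sin (dyad m * c) / dyad m) c.
Proof.
  apply (is_lim_seq_diff_quot (fun t => sin (t * c)));
    [|rewrite Rmult_0_l, sin_0; auto|apply is_lim_seq_dyad|apply dyad_neq0].
  apply is_derive_Reals. auto_derive; auto. rewrite Rmult_0_l, cos_0. ring.
Qed.

(* Both sides vanish together through the junk value [/ 0 = 0]: no side condition on [c]. *)
Lemma scaled_dup_frac_eq t w c : t <> 0 ->
  let S := ((/ t)%R * Csin (t * w))%C in
  (t * dup_frac (t * w)%C (t * c))%C
  = (2 * (S * Ccos (t * w)%C) / ((sin (t * c) / t) * (sin (t * c) / t) - S * S))%C.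
Proof.
  intros Ht S. unfold dup_frac, sin_sq_gap. rewrite Csin_double.
  assert (ES : Csin (t * w)%C = (t * S)%C).
  { unfold S. rewrite Cmult_assoc, <- RtoC_mult, Rinv_r by exact Ht. symmetry. apply Cmult_1_l. }
  assert (Ht' : (RtoC t : C) <> 0) by (apply RtoC_neq0, Ht).
  rewrite ES. clearbody S.
  set (s := Complex.RtoC (sin (t * c))). set (K := Ccos (t * w)%C). toC.
  assert (Ed : (s / t * (s / t) - S * S)%C = ((s * s - t * S * (t * S)) / (t * t))%C)
    by (field; auto).
  rewrite Ed. destruct (classic ((s * s - t * S * (t * S))%C = 0)) as [D|D].
  - assert (Z : (0 / (t * t))%C = 0) by (field; auto).
    rewrite D, Z. unfold Complex.Cdiv. rewrite Cinv_0. ring.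
  - field. split; auto.
Qed.

Lemma cos_beta k : cos (beta k) = 0.
Proof. apply cos_eq_0_1. exists (Z.of_nat k). rewrite <- INR_IZR_INZ. unfold beta. field. Qed.

Lemma beta_sq_sub_sq_neq0 w k : Ccos w <> RtoC 0 -> (beta k * beta k - w * w)%C <> 0.
Proof.
  intros Hc E. apply Hc.
  assert (E2 : ((w - beta k) * (w + beta k))%C = 0).
  { replace ((w - beta k) * (w + beta k))%C with (- (beta k * beta k - w * w))%C by ring.
    rewrite E. ring. }
  destruct (Cmult_eq0 _ _ E2) as [E3|E3].
  - apply C_eq_of_sub in E3. rewrite E3. unfold Ccos, Defs.Re, Defs.Im; simpl.
    rewrite cos_beta, sinh_0. unfold Defs.RtoC. f_equal; ring.
  - replace w with (- beta k)%C by (symmetry; apply C_eq_of_sub; rewrite <- E3; ring).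
    unfold Ccos, Defs.Re, Defs.Im; simpl.
    rewrite cos_neg, cos_beta, Ropp_0, sinh_0. unfold Defs.RtoC. f_equal; ring.
Qed.

Lemma dyad_dup_frac_lim w k : Ccos w <> RtoC 0 ->
  Clim (fun m => dyad m * dup_frac (dyad m * w)%C (dyad m * beta k))%C (pole_term w k).
Proof.
  intro Hc.
  eapply Clim_ext; [intro m; symmetry; apply scaled_dup_frac_eq, dyad_neq0|].
  replace (pole_term w k)
    with (2 * (w * 1) / (beta k * beta k - w * w))%C
    by (unfold pole_term; rewrite Cmult_1_r; reflexivity).
  apply Clim_div; [| |apply beta_sq_sub_sq_neq0, Hc].
  - apply Clim_mult; [apply Clim_const|].
    apply Clim_mult; [apply Csin_scaled_lim|apply Ccos_scaled_lim].
  - apply Clim_minus; [|apply Clim_mult; apply Csin_scaled_lim].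
    assert (Hs : Clim (fun m => (sin (dyad m * beta k) / dyad m)%C) (beta k)).
    { eapply Clim_ext; [intro m; apply RtoC_div, dyad_neq0|].
      apply Clim_RtoC, sin_scaled_lim. }
    apply Clim_mult; exact Hs.
Qed.

Lemma dyad_dup_frac_sub_pole_csum_lim w K : Ccos w <> RtoC 0 ->
  Clim (fun m => csum (fun k => dyad m * dup_frac (dyad m * w)%C (dyad m * beta k)
                                - pole_term w k)%C K) 0.
Proof.
  intro Hc. replace (0 : C) with (csum (fun k => pole_term w k - pole_term w k)%C K).
  - apply Clim_csum. intros k _. apply Clim_minus; [apply dyad_dup_frac_lim, Hc|apply Clim_const].
  - clear. induction K as [|K IH]; simpl; [reflexivity|]. rewrite IH. toC. ring.
Qed.

(** * Partial fractions of the tangent *)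

Theorem Ctan_partial_fractions w : Ccos w <> RtoC 0 -> forall eps, 0 < eps ->
  exists N0, forall N, (N0 <= N)%nat -> Cmod (Ctan w - csum (pole_term w) N)%C <= eps.
Proof.
  intros Hc eps He. set (W := Cmod w). assert (Wp : 0 <= W) by apply Cmod_ge_0.
  destruct (tail_cutoff W eps Wp He) as [K [HK1 [HKeps Hbeta]]].
  exists K. intros N HN.
  destruct (Clim_0_Cmod_le _ (dyad_dup_frac_sub_pole_csum_lim w K Hc) (eps / 2) ltac:(lra))
    as [M0 HM0].
  set (m := (M0 + N)%nat). specialize (HM0 m ltac:(unfold m; lia)).
  set (n := (2 ^ m)%nat).
  assert (HNn : (N <= n)%nat) by (pose proof (Nat.pow_gt_lin_r 2 m); unfold n, m in *; lia).
  destruct (tan_dup_frac_sum m w Hc) as [_ Ht]. rewrite Ht, <- csum_mult_l.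
  rewrite (csum_sub_split _ _ K N n) by lia.
  set (g := fun k => (dyad m * dup_frac (dyad m * w)%C (dyad m * beta k))%C) in *.
  assert (S1 : Cmod (csum (fun j => g (K + j)%nat - pole_term w (K + j)%nat)%C (n - K))
               <= 37 * W / INR K).
  { apply Cmod_csum_le_telescope; [lia|lra|]. intros j Hj.
    apply Cmod_dyad_dup_frac_sub_pole_le; [unfold n in *; lia|lia|apply Hbeta; lia]. }
  assert (S2 : Cmod (csum (fun j => pole_term w (N + j)%nat) (n - N)) <= W / INR K).
  { eapply Rle_trans.
    - apply (Cmod_csum_le_telescope _ W N); [lia|lra|]. intros j Hj.
      apply Cmod_pole_term_le_telescope; [lia|apply Hbeta; lia].
    - unfold Rdiv. apply Rmult_le_compat_l; [lra|].
      apply Rinv_le_contravar; [apply lt_0_INR; lia|apply le_INR; lia]. }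
  eapply Rle_trans; [apply Cmod_triangle|].
  eapply Rle_trans; [apply Rplus_le_compat_r, Cmod_triangle|].
  assert (38 * W / INR K = 37 * W / INR K + W / INR K) by (field; apply not_0_INR; lia).
  unfold g in S1. cbv beta in S1. lra.
Qed.

Lemma Cpartial_csum (f : nat -> C) N : Cpartial f N = csum f (S N).
Proof. induction N as [|N IH]; simpl; [toC; ring|rewrite IH; reflexivity]. Qed.

Lemma Cseries_sum_ext (f g : nat -> C) L :
  (forall n, f n = g n) -> Cseries_sum g L -> Cseries_sum f L.
Proof.
  intros E [H1 H2].
  assert (EP : forall N, Cpartial f N = Cpartial g N).
  { intro N. rewrite !Cpartial_csum. apply csum_ext. auto. }
  split; eapply Un_cv_ext; try eassumption; intro N; rewrite EP; reflexivity.
Qed.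

Lemma Cseries_sum_of_Cmod (f : nat -> C) L :
  (forall eps, 0 < eps -> exists N0, forall N, (N0 <= N)%nat -> Cmod (L - csum f N)%C <= eps) ->
  Cseries_sum f L.
Proof.
  intro H. split; intros eps He; destruct (H (eps / 2) ltac:(lra)) as [N0 HN];
    exists N0; intros N HN'; specialize (HN (S N) ltac:(lia));
    rewrite <- Cpartial_csum in HN; unfold R_dist, Defs.Re, Defs.Im;
    rewrite Rabs_minus_sym; unfold Rminus.
  - pose proof (re_le_Cmod (L - Cpartial f N)%C). simpl in *. lra.
  - pose proof (Rabs_snd_le_Cmod (L - Cpartial f N)%C). simpl in *. lra.
Qed.

Lemma Cseries_sum_pole_terms (K wp wq : C) : Ccos wp <> RtoC 0 -> Ccos wq <> RtoC 0 ->
  Cseries_sum (fun n => K * (pole_term wp n + pole_term wq n))%C (K * (Ctan wp + Ctan wq))%C.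
Proof.
  intros Hp Hq. apply Cseries_sum_of_Cmod. intros eps He.
  set (e := eps / (2 * (Cmod K + 1))).
  assert (He' : 0 < e) by (apply Rdiv_lt_0_compat; pose proof (Cmod_ge_0 K); lra).
  destruct (Ctan_partial_fractions wp Hp e He') as [N1 H1].
  destruct (Ctan_partial_fractions wq Hq e He') as [N2 H2].
  exists (max N1 N2). intros N HN.
  rewrite csum_mult_l, csum_add.
  replace (K * (Ctan wp + Ctan wq) - K * (csum (pole_term wp) N + csum (pole_term wq) N))%C
    with (K * ((Ctan wp - csum (pole_term wp) N) + (Ctan wq - csum (pole_term wq) N)))%C
    by ring.
  specialize (H1 N ltac:(lia)). specialize (H2 N ltac:(lia)).
  rewrite Cmod_mult. pose proof (Cmod_ge_0 K).
  pose proof (Cmod_triangle (Ctan wp - csum (pole_term wp) N) (Ctan wq - csum (pole_term wq) N)).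
  assert (Ee : (Cmod K + 1) * (2 * e) = eps) by (unfold e; field; lra).
  apply Rle_trans with (Cmod K * (2 * e)); [apply Rmult_le_compat_l; lra|nra].
Qed.

(** * Pochhammer symbols and the terms of the series *)

Lemma poch_shift (z : C) n : (poch z n * (z + INR n))%C = (z * poch (z + 1) n)%C.
Proof.
  induction n as [|n IH]; simpl poch; Defs_to_C.
  - simpl. toC. ring.
  - rewrite IH, S_INR, RtoC_plus. ring.
Qed.

Lemma poch_one n : poch (RtoC 1) n = RtoC (INR (fact n)).
Proof.
  induction n as [|n IH]; [reflexivity|]. simpl poch. Defs_to_C.
  rewrite IH, fact_simpl, mult_INR, S_INR.
  rewrite !RtoC_mult, RtoC_plus. toC. ring.
Qed.

Lemma add_INR_neq0 (t : C) n : ~ in_Z0minus t -> (t + INR n)%C <> 0.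
Proof.
  intros Ht E. apply Ht. exists n. apply (C_eq_of_sub t).
  replace (t - RtoC (- INR n))%C with (t + INR n)%C
    by (rewrite RtoC_opp; toC; ring). exact E.
Qed.

Lemma poch_neq0 (z : C) n : ~ in_Z0minus z -> poch z n <> RtoC 0.
Proof.
  intro Hz. induction n as [|n IH]; simpl poch; Defs_to_C.
  - intro E. apply RtoC_inj in E. lra.
  - apply Cmult_neq_0; [exact IH|apply add_INR_neq0, Hz].
Qed.

Lemma not_in_Z0minus_succ (t : C) : ~ in_Z0minus t -> ~ in_Z0minus (1 + t)%C.
Proof.
  intros Ht [n E]. apply Ht. exists (S n). Defs_to_C. rewrite S_INR.
  replace t with (1 + t - 1)%C by ring. rewrite E. rewrite <- RtoC_minus. f_equal. ring.
Qed.

Lemma not_in_Z0minus_of_succ (t : C) : t <> 0 -> ~ in_Z0minus (1 + t)%C -> ~ in_Z0minus t.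
Proof.
  intros H0 H1 [n Ez]. destruct n as [|n].
  - apply H0. rewrite Ez. unfold Defs.RtoC, Complex.RtoC. simpl. f_equal. ring.
  - apply H1. exists n. Defs_to_C. rewrite Ez, S_INR, <- RtoC_plus. f_equal. ring.
Qed.

Lemma not_in_Z0minus_neq0 (z : C) : ~ in_Z0minus z -> z <> 0.
Proof. intro Hz. rewrite <- (Cplus_0_r z). apply (add_INR_neq0 z 0), Hz. Qed.

Lemma poch_succ_eq (z : C) n : z <> 0 -> poch (z + 1)%C n = (poch z n * (z + INR n) / z)%C.
Proof.
  intro Hz. rewrite poch_shift. generalize (poch (z + 1)%C n). intro P. change C in P.
  toC. field. exact Hz.
Qed.

Lemma poch_eq_succ (t : C) n :
  (t + INR n)%C <> 0 -> poch t n = (t * poch (1 + t)%C n / (t + INR n))%C.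
Proof.
  intro Ht. replace (1 + t)%C with (t + 1)%C by ring. rewrite <- poch_shift.
  generalize (poch t n). intro P. change C in P. toC. field. exact Ht.
Qed.

Lemma Cprod_map_const_one (l : list nat) : Cprod (map (fun _ => RtoC 1) l) = RtoC 1.
Proof.
  induction l as [|a l IH]; [reflexivity|]. simpl. rewrite IH. Defs_to_C. toC. ring.
Qed.

Lemma hyp_term_telescoped (z1 z2 t1 t2 t3 t4 : C) n :
  ~ in_Z0minus z1 -> ~ in_Z0minus z2 ->
  ~ in_Z0minus t1 -> ~ in_Z0minus t2 -> ~ in_Z0minus t3 -> ~ in_Z0minus t4 ->
  hyp_term [RtoC 1; (z1 + 1)%C; (z2 + 1)%C; t1; t2; t3; t4]
           [z1; z2; (1 + t1)%C; (1 + t2)%C; (1 + t3)%C; (1 + t4)%C] (RtoC 1) n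
  = ((z1 + INR n) * (z2 + INR n) / (z1 * z2)
     * (t1 / (t1 + INR n)) * (t2 / (t2 + INR n))
     * (t3 / (t3 + INR n)) * (t4 / (t4 + INR n)))%C.
Proof.
  intros Hz1 Hz2 H1 H2 H3 H4.
  unfold hyp_term. rewrite Cprod_map_const_one. unfold Cprod. simpl map. cbn [fold_right].
  rewrite poch_one. Defs_to_C.
  rewrite (poch_succ_eq z1), (poch_succ_eq z2) by (apply not_in_Z0minus_neq0; auto).
  rewrite (poch_eq_succ t1), (poch_eq_succ t2), (poch_eq_succ t3), (poch_eq_succ t4)
    by (apply add_INR_neq0; auto).
  assert (Hf : (INR (fact n) : C) <> 0) by (apply RtoC_neq0, INR_fact_neq_0).
  pose proof (poch_neq0 z1 n Hz1). pose proof (poch_neq0 z2 n Hz2).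
  pose proof (poch_neq0 _ n (not_in_Z0minus_succ t1 H1)).
  pose proof (poch_neq0 _ n (not_in_Z0minus_succ t2 H2)).
  pose proof (poch_neq0 _ n (not_in_Z0minus_succ t3 H3)).
  pose proof (poch_neq0 _ n (not_in_Z0minus_succ t4 H4)).
  pose proof (not_in_Z0minus_neq0 z1 Hz1). pose proof (not_in_Z0minus_neq0 z2 Hz2).
  pose proof (add_INR_neq0 t1 n H1). pose proof (add_INR_neq0 t2 n H2).
  pose proof (add_INR_neq0 t3 n H3). pose proof (add_INR_neq0 t4 n H4).
  set (A1 := poch z1 n) in *. set (A2 := poch z2 n) in *.
  set (B1 := poch (1 + t1)%C n) in *. set (B2 := poch (1 + t2)%C n) in *.
  set (B3 := poch (1 + t3)%C n) in *. set (B4 := poch (1 + t4)%C n) in *.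
  clearbody A1 A2 B1 B2 B3 B4. change C in A1, A2, B1, B2, B3, B4.
  toC. field. repeat split; auto.
Qed.

Definition F76_const (p q : C) : C :=
  (((1/4)%R - p * p) * ((1/4)%R - q * q) / (((1/4)%R - p * q) * (p + q)) * (PI / 2)%R)%C.

Lemma F76_ratio_partial_fractions (p q : C) n :
  let x := (INR n + (1/2)%R)%C in
  (x - p)%C <> 0 -> (x - q)%C <> 0 -> (x + p)%C <> 0 -> (x + q)%C <> 0 ->
  ((1/4)%R - p * q)%C <> 0 -> (p + q)%C <> 0 ->
  ((x * x - p * q) / ((1/4)%R - p * q)
   * (((1/2)%R - p) / (x - p)) * (((1/2)%R - q) / (x - q))
   * (((1/2)%R + p) / (x + p)) * (((1/2)%R + q) / (x + q)))%C
  = (F76_const p q * (pole_term (PI * p) n + pole_term (PI * q) n))%C.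
Proof.
  intros x h1 h2 h3 h4 h5 h6.
  assert (HP : (PI : C) <> 0) by (intro X; apply RtoC_inj in X; pose proof PI_RGT_0; lra).
  assert (Hb : (beta n : C) = (x * PI)%C)
    by (unfold beta, x; rewrite RtoC_mult, RtoC_plus; reflexivity).
  unfold F76_const, pole_term. rewrite Hb.
  replace ((x * PI) * (x * PI) - PI * p * (PI * p))%C
    with (PI * PI * ((x - p) * (x + p)))%C by ring.
  replace ((x * PI) * (x * PI) - PI * q * (PI * q))%C
    with (PI * PI * ((x - q) * (x + q)))%C by ring.
  assert (h5' : (1 - p * q * 4)%C <> 0).
  { intro E. apply h5. rewrite RtoC_div by lra.
    replace (1 / 4 - p * q)%C with (/ 4 * (1 - p * q * 4))%C by (field; apply RtoC_neq0; lra).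
    rewrite E. ring. }
  rewrite !RtoC_div by lra.
  field. repeat split; auto.
Qed.

Lemma half_sub_mul_half_add (p q mu : C) : (mu * mu)%C = (p * q)%C ->
  (((1/2)%R - mu) * ((1/2)%R + mu))%C = ((1/4)%R - p * q)%C.
Proof.
  intro Hmu. rewrite <- Hmu. replace (1/4) with (1/2 * (1/2)) by field. rewrite RtoC_mult. ring.
Qed.

Lemma hyp_term_F76 (p q mu : C) n :
  (mu * mu)%C = (p * q)%C -> (p + q)%C <> 0 ->
  ~ in_Z0minus ((1/2)%R - mu)%C -> ~ in_Z0minus ((1/2)%R + mu)%C ->
  ~ in_Z0minus ((1/2)%R - p)%C -> ~ in_Z0minus ((1/2)%R - q)%C ->
  ~ in_Z0minus ((1/2)%R + p)%C -> ~ in_Z0minus ((1/2)%R + q)%C ->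
  hyp_term
    [RtoC 1; ((3/2)%R - mu)%C; ((3/2)%R + mu)%C;
     ((1/2)%R - p)%C; ((1/2)%R - q)%C; ((1/2)%R + p)%C; ((1/2)%R + q)%C]
    [((1/2)%R - mu)%C; ((1/2)%R + mu)%C;
     (1 + ((1/2)%R - p))%C; (1 + ((1/2)%R - q))%C; (1 + ((1/2)%R + p))%C; (1 + ((1/2)%R + q))%C]
    (RtoC 1) n
  = (F76_const p q * (pole_term (PI * p) n + pole_term (PI * q) n))%C.
Proof.
  intros Hmu Hpq Hz1 Hz2 H1 H2 H3 H4.
  assert (E32 : ((3/2)%R : C) = ((1/2)%R + 1)%C).
  { replace (3/2) with (1/2 + 1) by field. apply RtoC_plus. }
  replace ((3/2)%R - mu)%C with ((1/2)%R - mu + 1)%C by (rewrite E32; ring).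
  replace ((3/2)%R + mu)%C with ((1/2)%R + mu + 1)%C by (rewrite E32; ring).
  rewrite hyp_term_telescoped by auto.
  set (x := (INR n + (1/2)%R)%C).
  pose proof (half_sub_mul_half_add p q mu Hmu) as Ez.
  assert (Ez' : (((1/2)%R - mu + INR n) * ((1/2)%R + mu + INR n))%C = (x * x - p * q)%C).
  { unfold x. rewrite <- Hmu. ring. }
  assert (E1 : ((1/2)%R - p + INR n)%C = (x - p)%C) by (unfold x; ring).
  assert (E2 : ((1/2)%R - q + INR n)%C = (x - q)%C) by (unfold x; ring).
  assert (E3 : ((1/2)%R + p + INR n)%C = (x + p)%C) by (unfold x; ring).
  assert (E4 : ((1/2)%R + q + INR n)%C = (x + q)%C) by (unfold x; ring).
  assert (X1 : (x - p)%C <> 0) by (rewrite <- E1; apply add_INR_neq0, H1).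
  assert (X2 : (x - q)%C <> 0) by (rewrite <- E2; apply add_INR_neq0, H2).
  assert (X3 : (x + p)%C <> 0) by (rewrite <- E3; apply add_INR_neq0, H3).
  assert (X4 : (x + q)%C <> 0) by (rewrite <- E4; apply add_INR_neq0, H4).
  assert (X5 : ((1/4)%R - p * q)%C <> 0).
  { rewrite <- Ez. apply Cmult_neq_0; apply not_in_Z0minus_neq0; auto. }
  rewrite <- (F76_ratio_partial_fractions p q n X1 X2 X3 X4 X5 Hpq). fold x.
  rewrite Ez, Ez', E1, E2, E3, E4. reflexivity.
Qed.

Lemma odd_int_of_half (p : C) (k : Z) : p = RtoC (IZR k + 1/2) -> odd_int (2 * p)%C.
Proof.
  intro Ep. exists k. rewrite Ep, plus_IZR, mult_IZR. unfold Cmult, Complex.RtoC, Defs.RtoC; simpl.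
  f_equal; field.
Qed.

Lemma half_sub_neq0 (p : C) : ~ odd_int (2 * p)%C -> ((1/2)%R - p)%C <> 0.
Proof.
  intros H E. apply H, (odd_int_of_half p 0). apply C_eq_of_sub in E. rewrite <- E.
  Defs_to_C. f_equal. ring.
Qed.

Lemma half_add_neq0 (p : C) : ~ odd_int (2 * p)%C -> ((1/2)%R + p)%C <> 0.
Proof.
  intros H E. apply H, (odd_int_of_half p (-1)).
  replace p with (((1/2)%R + p) - (1/2)%R)%C by ring. rewrite E.
  rewrite <- RtoC_minus. Defs_to_C. f_equal. lra.
Qed.

Lemma not_in_Z0minus_half_sub (p : C) :
  ~ odd_int (2 * p)%C -> ~ in_Z0minus (1 + ((1/2)%R - p))%C -> ~ in_Z0minus ((1/2)%R - p)%C.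
Proof. intros Ho. apply not_in_Z0minus_of_succ, half_sub_neq0, Ho. Qed.

Lemma not_in_Z0minus_half_add (p : C) :
  ~ odd_int (2 * p)%C -> ~ in_Z0minus (1 + ((1/2)%R + p))%C -> ~ in_Z0minus ((1/2)%R + p)%C.
Proof. intros Ho. apply not_in_Z0minus_of_succ, half_add_neq0, Ho. Qed.

Lemma Ccos_PI_mult_neq0 (p : C) : ~ odd_int (2 * p)%C -> Ccos (PI * p)%C <> RtoC 0.
Proof.
  intro H. apply Ccos_neq0. intros k E. apply H, (odd_int_of_half p k).
  assert (HP : (PI : C) <> 0) by (apply RtoC_neq0; pose proof PI_RGT_0; lra).
  replace p with (/ PI * (PI * p))%C by (field; exact HP). rewrite E.
  pose proof PI_RGT_0. rewrite <- RtoC_inv, <- RtoC_mult by lra. Defs_to_C. f_equal. field. lra.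
Qed.

Lemma F76_rhs_eq (a b c : C) : a <> 0 -> b <> 0 ->
  let p := ((a + c) / (2 * b))%C in
  let q := ((a - c) / (2 * b))%C in
  Ccos (PI * p)%C <> RtoC 0 -> Ccos (PI * q)%C <> RtoC 0 -> ((1/4)%R - p * q)%C <> 0 ->
  (PI * ((b - a - c) * (b + a + c) * ((b - a + c) * (b + a - c)))
     / (4 * (a * (b * (b * b)) - a * (a * a) * b + a * (b * (c * c))))
   * (Csin (a * PI / b)%C / (Ccos (c * PI / b)%C + Ccos (a * PI / b)%C)))%C
  = (F76_const p q * (Ctan (PI * p) + Ctan (PI * q)))%C.
Proof.
  intros ha hb p q Hcp Hcq Hpq.
  assert (H2 : (2 : C) <> 0) by (apply RtoC_neq0; lra).
  assert (HP : (PI : C) <> 0) by (apply RtoC_neq0; pose proof PI_RGT_0; lra).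
  assert (Ea : (a * PI / b)%C = (PI * p + PI * q)%C) by (unfold p, q; field; auto).
  assert (Ec : (c * PI / b)%C = (PI * p + - (PI * q))%C) by (unfold p, q; field; auto).
  rewrite Ea, Ec, Csin_add, !Ccos_add, Csin_opp, Ccos_opp.
  assert (Hd : (a * (b * (b * b)) - a * (a * a) * b + a * (b * (c * c)))%C
               = (4 * (a * (b * (b * b))) * ((1/4)%R - p * q))%C).
  { unfold p, q. rewrite RtoC_div by lra. field. auto. }
  rewrite Hd. unfold Ctan, F76_const.
  set (Sp := Csin (PI * p)%C). set (Sq := Csin (PI * q)%C).
  set (Cp := Ccos (PI * p)%C) in *. set (Cq := Ccos (PI * q)%C) in *.
  clearbody Sp Sq Cp Cq. change C in Sp, Sq, Cp, Cq.
  set (D := ((1/4)%R - p * q)%C) in *. clearbody D.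
  assert (Hcos : (Cp * Cq - Sp * - Sq + (Cp * Cq - Sp * Sq))%C <> 0).
  { replace (Cp * Cq - Sp * - Sq + (Cp * Cq - Sp * Sq))%C with (2 * (Cp * Cq))%C by ring.
    repeat apply Cmult_neq_0; auto. }
  assert (Hac : (a + c + (a - c))%C <> 0).
  { replace (a + c + (a - c))%C with (2 * a)%C by ring. apply Cmult_neq_0; auto. }
  unfold p, q. rewrite !RtoC_div by lra. toC.
  field. repeat split; auto.
Qed.

Theorem mainTheorem5 (a b c s : Cplx)
  (ha : a <> RtoC 0)
  (hb : 0 < Re b)
  (h1 : 0 < Re (Cadd (Cadd b a) c))
  (h2 : 0 < Re (Csub (Cadd b a) c))
  (h3 : 0 < Re (Cadd (Csub b a) c))
  (h4 : 0 < Re (Csub (Csub b a) c))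
  (hodd1 : ~ odd_int (Cdiv (Cadd a c) b))
  (hodd2 : ~ odd_int (Cdiv (Csub a c) b))
  (hs : Cmul s s = Csub (Cmul a a) (Cmul c c)) :
  let mu := Cdiv s (Cmul (RtoC 2) b) in
  let t1 := Csub (RtoC (1/2)) (Cdiv (Cadd a c) (Cmul (RtoC 2) b)) in
  let t2 := Csub (RtoC (1/2)) (Cdiv (Csub a c) (Cmul (RtoC 2) b)) in
  let t3 := Cadd (RtoC (1/2)) (Cdiv (Cadd a c) (Cmul (RtoC 2) b)) in
  let t4 := Cadd (RtoC (1/2)) (Cdiv (Csub a c) (Cmul (RtoC 2) b)) in
  let Q := Cmul (Cmul (Csub (Csub b a) c) (Cadd (Cadd b a) c))
                (Cmul (Cadd (Csub b a) c) (Csub (Cadd b a) c)) in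
  ~ in_Z0minus (Csub (RtoC (1/2)) mu) ->
  ~ in_Z0minus (Cadd (RtoC (1/2)) mu) ->
  ~ in_Z0minus (Cadd (RtoC 1) t1) ->
  ~ in_Z0minus (Cadd (RtoC 1) t2) ->
  ~ in_Z0minus (Cadd (RtoC 1) t3) ->
  ~ in_Z0minus (Cadd (RtoC 1) t4) ->
  pFq_eq
    [RtoC 1; Csub (RtoC (3/2)) mu; Cadd (RtoC (3/2)) mu; t1; t2; t3; t4]
    [Csub (RtoC (1/2)) mu; Cadd (RtoC (1/2)) mu;
     Cadd (RtoC 1) t1; Cadd (RtoC 1) t2; Cadd (RtoC 1) t3; Cadd (RtoC 1) t4]
    (RtoC 1)
    (Cmul
      (Cdiv (Cmul (RtoC PI) Q)
            (Cmul (RtoC 4)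
               (Cadd (Csub (Cmul a (Cmul b (Cmul b b))) (Cmul (Cmul a (Cmul a a)) b))
                     (Cmul a (Cmul b (Cmul c c))))))
      (Cdiv (Csin (Cdiv (Cmul a (RtoC PI)) b))
            (Cadd (Ccos (Cdiv (Cmul c (RtoC PI)) b)) (Ccos (Cdiv (Cmul a (RtoC PI)) b))))).
Proof.
  cbv zeta. intros Hz1 Hz2 Ht1 Ht2 Ht3 Ht4. unfold pFq_eq. Defs_to_C. change C in a, b, c, s.
  assert (Hb : b <> 0) by (intro E; rewrite E in hb; simpl in hb; lra).
  assert (H2b : (2 * b)%C <> 0) by (apply Cmult_neq_0; [apply RtoC_neq0; lra|exact Hb]).
  set (p := ((a + c) / (2 * b))%C) in *. set (q := ((a - c) / (2 * b))%C) in *.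
  set (mu := (s / (2 * b))%C) in *.
  assert (Hmu : (mu * mu)%C = (p * q)%C).
  { unfold mu, p, q. transitivity (s * s / (2 * b * (2 * b)))%C; [field; auto|].
    rewrite hs. field. auto. }
  assert (Hpq : (p + q)%C <> 0).
  { intro E. apply ha. replace a with (b * (p + q))%C by (unfold p, q; toC; field; auto).
    rewrite E. toC. ring. }
  replace ((a + c) / b)%C with (2 * p)%C in hodd1 by (unfold p; field; auto).
  replace ((a - c) / b)%C with (2 * q)%C in hodd2 by (unfold q; field; auto).
  assert (Hpq' : ((1/4)%R - p * q)%C <> 0).
  { rewrite <- (half_sub_mul_half_add p q mu Hmu).
    apply Cmult_neq_0; apply not_in_Z0minus_neq0; auto. }
  rewrite F76_rhs_eq; auto using Ccos_PI_mult_neq0.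
  eapply Cseries_sum_ext; [|apply Cseries_sum_pole_terms; apply Ccos_PI_mult_neq0; auto].
  intro n. apply hyp_term_F76; auto using not_in_Z0minus_half_sub, not_in_Z0minus_half_add.
Qed.
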